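(* Let $G=(V,E,\{w_j\})$ be a reduced instance of the line highway problem with $[s,\ell]$-valuation (with $s\ge 1$), and let $r=s/\ell$. Let $\boldsymbol{\sigma}$ be the (random) price vector output by the algorithm Line_Random described in the context. Then \[ \frac{\mathrm{Opt}_{\rm coup}(G)}{\mathbf{E}[\mathrm{Profit}_{\rm coup}(\boldsymbol{\sigma})]}\le \begin{cases} 3/r & 0<r\le 1/2,\\ 6 & 1/2<r\le 1,\end{cases} \] where the expectation is over the random choices of the algorithm.
   Context: For integers $a\le b$, $[a,b]=\{a,a+1,\dots,b\}$. A reduced instance of the line highway problem is $G=(V,E,\{w_j\})$ with $V=[1,n]$ (items) and a finite multiset $E=\{e_1,\dots,e_m\}$ of customers, each $e_j=[j_s,j_t]$ with $1\le j_s\le j_t\le n$, having valuation (weight) $w_j>0$; valuations are integers. It has $[s,\ell]$-valuation if $s=\min_j w_j$ and $\ell=\max_j w_j$. For a price vector $\mathbf p=(p_1,\dots,p_n)\in\mathbb R^n$ (prices may be negative), let $p(e_j)=\sum_{i\in e_j}p_i$. The coupon-model profit is $\mathrm{Profit}_{\rm coup}(\mathbf p)=\sum_{j:\,w_j\ge p(e_j)}\max\{p(e_j),0\}$, and $\mathrm{Opt}_{\rm coup}(G)=\max_{\mathbf p}\mathrm{Profit}_{\rm coup}(\mathbf p)$. The DAG representation of $G$ has vertices $u_0,u_1,\dots,u_n$ and, for each $e_j=[j_s,j_t]$, an arc $u_{j_s-1}\to u_{j_t}$ of weight $w_j$; a partial-sum vector $(s_0,\dots,s_n)$ on these vertices determines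 the price vector $p_i=s_i-s_{i-1}$, $i\in[1,n]$. Algorithm Line_Random: construct the DAG representation; for each $u_i$ independently choose a partial sum $s_i$ uniformly at random from the integers $\{0,1,\dots,\ell\}$; output $\sigma_i=s_i-s_{i-1}$ for $i\in[1,n]$. *)

From mathcomp Require Import all_boot all_order all_algebra.
Set Implicit Arguments. Unset Strict Implicit. Unset Printing Implicit Defensive.
Import Order.TTheory GRing.Theory Num.Theory.
Local Open Scope ring_scope.

(* A customer e_j = [cs, ct] (items are 1..n) with integer valuation cw. *)
Record customer := Customer { cs : nat; ct : nat; cw : nat }.

Definition valid_instance (n : nat) (E : seq customer) : bool :=
  all (fun c => (1 <= cs c)%N && (cs c <= ct c)%N && (ct c <= n)%N) E.

Section Profit.
Variable R : realFieldType.

(* Price vectors: p : 'I_n -> R, where item i (1-based) has price p (i-1). *)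
Definition price_of (n : nat) (p : 'I_n -> R) (c : customer) : R :=
  \sum_(i < n | (cs c <= i.+1 <= ct c)%N) p i.

Definition profit_coup (n : nat) (E : seq customer) (p : 'I_n -> R) : R :=
  \sum_(c <- E | price_of p c <= (cw c)%:R) Num.max (price_of p c) 0.

(* Line_Random: partial sums s_0..s_n in {0..l}; sigma_i = s_i - s_{i-1}. *)
Definition line_random_price (n l : nat) (s : {ffun 'I_n.+1 -> 'I_l.+1})
  : 'I_n -> R :=
  fun i => ((s (inord i.+1) : nat)%:R - (s (inord i) : nat)%:R).

Definition expected_profit_line_random (n l : nat) (E : seq customer) : R :=
  (\sum_(s : {ffun 'I_n.+1 -> 'I_l.+1})
      profit_coup E (line_random_price s)) / ((l.+1 ^ n.+1)%N)%:R.

End Profit.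

From mathcomp Require Import all_boot all_order all_algebra zify ring lra.
Import Order.TTheory GRing.Theory Num.Theory.

Set Implicit Arguments.
Unset Strict Implicit.
Unset Printing Implicit Defensive.

(** Every customer pays at most its valuation, so the optimum is at most the
    sum of the valuations.  Under Line_Random a customer [[a, b]] is charged
    [s_b - s_(a-1)], a difference of two independent uniform values in
    [{0, ..., l}]; summing its coupon revenue over the [(l+1)^2] pairs of values
    gives [w (w+1) (3l + 2 - 2w) / 6] for valuation [w <= l].  The factor
    [(w+1)(3l + 2 - 2w)] is concave in [w], which yields
    [w <= B * E[revenue]] for every [s <= w <= l], with [B] the claimed ratio;
    summing over the customers proves the bound. *)

(* Coupon revenue from a customer of valuation [w] whose partial sums at the
   two ends of its interval are [x] and [y]. *)
Definition gain (w x y : nat) : nat := if (x < y) && (y <= x + w) then y - x else 0.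

Definition total_gain (L w : nat) : nat := \sum_(x < L) \sum_(y < L) gain w x y.

Lemma gainSS w x y : gain w x.+1 y.+1 = gain w x y.
Proof. by rewrite /gain ltnS addSn ltnS subSS. Qed.

Lemma sum_gain0 L w : 2 * \sum_(y < L.+1) gain w 0 y = minn L w * (minn L w).+1.
Proof.
elim: L => [|L IH]; first by rewrite big_ord1 /gain /=; lia.
rewrite big_ord_recr mulnDr IH /gain /=.
case: (leqP L.+1 w) => h; lia.
Qed.

Lemma total_gainS L w :
  total_gain L.+1 w = \sum_(y < L.+1) gain w 0 y + total_gain L w.
Proof.
rewrite /total_gain big_ord_recl; congr (_ + _).
apply: eq_bigr => x _; rewrite big_ord_recl [gain _ _ _]/gain /=.
by apply: eq_bigr => y _; rewrite gainSS.
Qed.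

Lemma total_gain_eq L w : 6 * total_gain L.+1 w =
  if L <= w then L * L.+1 * L.+2 else w * w.+1 * (3 * L + 2 - 2 * w).
Proof.
elim: L => [|L IH]; first by rewrite /total_gain !big_ord1.
rewrite total_gainS mulnDr.
have := sum_gain0 L.+1 w.
move: IH; case: (leqP L w) => h1; case: (leqP L.+1 w) => h2 IH HP.
- nia.
- have eq_wL : w = L by lia.
  subst w.
  by rewrite (_ : 3 * L.+1 + 2 - 2 * L = L + 5); nia.
- lia.
- rewrite (_ : 3 * L.+1 + 2 - 2 * w = (3 * L + 2 - 2 * w) + 3); last lia.
  nia.
Qed.

Lemma total_gain_closed w l : w <= l ->
  6 * total_gain l.+1 w = w * w.+1 * (3 * l + 2 - 2 * w).
Proof.
move=> hwl; rewrite total_gain_eq; case: leqP => // hlw.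
have -> : w = l by lia.
by rewrite (_ : 3 * l + 2 - 2 * l = l.+2); last lia.
Qed.

(* The concave quadratic in [w] takes the value [(l+1)(l+2)] at [w = l/2] and
   at [w = l]. *)
Lemma gain_factor_ge w l : l <= 2 * w -> w <= l ->
  l.+1 * l.+2 <= w.+1 * (3 * l + 2 - 2 * w).
Proof.
move=> hlw hwl.
have [k [m [-> ->]]] : exists k m, w = k + m /\ l = 2 * k + m.
  by exists (l - w), (2 * w - l); lia.
rewrite (_ : 3 * _ + 2 - _ = 4 * k + m + 2); last lia.
nia.
Qed.

Lemma total_gain_ge_large s w l : s <= w <= l -> l < 2 * s ->
  w * l.+1 ^ 2 <= 6 * total_gain l.+1 w.
Proof.
move=> /andP[hsw hwl] hls; rewrite total_gain_closed // -mulnA leq_mul //.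
have hlw : l <= 2 * w by lia.
apply: leq_trans _ (gain_factor_ge hlw hwl).
by rewrite expnS expn1 leq_mul2l leqnSn orbT.
Qed.

Lemma total_gain_ge_small s w l : s <= w <= l -> 2 * s <= l ->
  2 * s * w * l.+1 ^ 2 <= l * (6 * total_gain l.+1 w).
Proof.
move=> /andP[hsw hwl] hsl; rewrite total_gain_closed //.
suff : 2 * s * l.+1 ^ 2 <= l * (w.+1 * (3 * l + 2 - 2 * w)) by nia.
case: (leqP l (2 * w)) => hlw.
  have := gain_factor_ge hlw hwl; nia.
have : s.+1 * (2 * l + 2) <= w.+1 * (3 * l + 2 - 2 * w).
  by apply: leq_mul; lia.
nia.
Qed.

Section FfunPair.
Variables (T J : finType) (a b : T).
Hypothesis neq_ab : a != b.

Lemma card_ffun_pair (x y : J) :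
  #|[pred S : {ffun T -> J} | (S a, S b) == (x, y)]| = #|J| ^ (#|T| - 2).
Proof.
pose F i := if i == a then pred1 x else if i == b then pred1 y else predT.
rewrite (@eq_card _ _ (family F)); last first.
  move=> S; rewrite !inE xpair_eqE; apply/andP/familyP => [[/eqP ha /eqP hb] i|H].
    rewrite /F; case: eqP => [->|_]; [|case: eqP => [->|_]]; rewrite inE ?ha ?hb //.
  by split; [move: (H a) | move: (H b)]; rewrite /F ?eqxx // eq_sym (negbTE neq_ab).
rewrite card_family foldrE big_image /= (bigD1 a) //= (bigD1 b) 1?eq_sym //=.
rewrite /F !eqxx eq_sym (negbTE neq_ab) !card1 !mul1n.
rewrite (eq_bigr (fun _ => #|J|)); last first.
  by move=> i /andP[ha hb]; rewrite /F (negbTE ha) (negbTE hb); apply: eq_card.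
rewrite prod_nat_const (@eq_card _ _ (~: [set a; b])); last first.
  by move=> i; rewrite !inE negb_or.
by rewrite cardsCs setCK cards2 neq_ab.
Qed.

Lemma sum_ffun_pair (V : nmodType) (G : J -> J -> V) :
  (\sum_(S : {ffun T -> J}) G (S a) (S b) =
   (\sum_(x : J) \sum_(y : J) G x y) *+ #|J| ^ (#|T| - 2))%R.
Proof.
rewrite (partition_big (fun S : {ffun T -> J} => (S a, S b)) xpredT) //=.
rewrite pair_big -sumrMnl; apply: eq_bigr => [[x y]] _.
rewrite (eq_bigr (fun _ => G x y)) => [|S /eqP[-> ->] //].
by rewrite sumr_const card_ffun_pair.
Qed.

End FfunPair.

Lemma big_seq_all {R : Type} {idx : R} {op : R -> R -> R} {I : Type}
    {P : pred I} {r : seq I} {F : I -> R} :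
  all P r -> \big[op/idx]_(i <- r) F i = \big[op/idx]_(i <- r | P i) F i.
Proof. by move=> /all_filterP {1}<-; rewrite big_filter. Qed.

Local Open Scope ring_scope.

Lemma coupon_revenue_gain (R : realFieldType) (w x y : nat) :
  (if y%:R - x%:R <= w%:R :> R then Num.max (y%:R - x%:R : R) 0 else 0) =
  (gain w x y)%:R.
Proof.
rewrite /gain; case: (ltnP x y) => hxy /=.
  rewrite -natrB ?(ltnW hxy) // ler_nat leq_subLR addnC.
  by case: ifP => // _; rewrite max_l ?ler0n.
have hle : y%:R - x%:R <= 0 :> R by rewrite subr_le0 ler_nat.
by rewrite (le_trans hle) ?ler0n // max_r.
Qed.

Section LineRandom.
Variables (R : realFieldType) (n l : nat) (S : {ffun 'I_n.+1 -> 'I_l.+1}).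

Lemma price_of_line_random (c : customer) :
  (1 <= cs c)%N && (cs c <= ct c)%N && (ct c <= n)%N ->
  price_of (line_random_price R S) c =
  (S (inord (ct c)) : nat)%:R - (S (inord (cs c).-1) : nat)%:R.
Proof.
case/andP=> /andP[h1 h2] h3.
pose u k : R := (S (inord k) : nat)%:R.
rewrite -[RHS]/(u (ct c) - u (cs c).-1).
have hc : ((cs c).-1 <= ct c)%N by lia.
rewrite -(telescope_sumr _ hc) (big_nat_widen _ _ _ _ _ h3).
rewrite (big_nat_widenl _ _ _ _ _ (leq0n _)).
rewrite big_mkord; apply: eq_bigl => i /=.
by rewrite andbC -[((cs c).-1 <= i)%N]ltnS (prednK h1).
Qed.

Lemma profit_coup_line_random (E : seq customer) : valid_instance n E ->
  profit_coup E (line_random_price R S) =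
  \sum_(c <- E) (gain (cw c) (S (inord (cs c).-1)) (S (inord (ct c))))%:R.
Proof.
move=> hv; rewrite /profit_coup big_mkcond /=.
rewrite (big_seq_all hv) [RHS](big_seq_all hv).
by apply: eq_bigr => c hc; rewrite price_of_line_random // coupon_revenue_gain.
Qed.

End LineRandom.

Lemma expected_profit_line_random_eq (R : realFieldType) (n l : nat) (E : seq customer) :
  valid_instance n E ->
  expected_profit_line_random R n l E =
  \sum_(c <- E) (total_gain l.+1 (cw c))%:R / (l.+1 ^ 2)%:R.
Proof.
move=> hv; rewrite /expected_profit_line_random.
under eq_bigr => S _ do rewrite profit_coup_line_random //.
rewrite exchange_big mulr_suml (big_seq_all hv) [RHS](big_seq_all hv).
apply: eq_bigr => c /andP[/andP[h1 h2] h3].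
have neq : (inord (cs c).-1 : 'I_n.+1) != inord (ct c).
  by apply/eqP => /(congr1 val); rewrite /= !inordK; lia.
rewrite (sum_ffun_pair neq (fun x y : 'I_l.+1 => (gain (cw c) x y)%:R)) !card_ord.
have -> : \sum_(x < l.+1) \sum_(y < l.+1) (gain (cw c) x y)%:R =
           (total_gain l.+1 (cw c))%:R :> R.
  by rewrite /total_gain natr_sum; apply: eq_bigr => x _; rewrite natr_sum.
rewrite -{2}(subnK (_ : 2 <= n.+1)%N) ?ltnS; last lia.
set t := (total_gain l.+1 (cw c))%:R.
by rewrite expnD natrM -(mulr_natr t) invfM mulrA mulfK // pnatr_eq0 expn_eq0.
Qed.

Lemma natr_ratio_le_half (R : realFieldType) (s l : nat) : (0 < l)%N ->
  (s%:R / l%:R <= 1 / 2 :> R) = (2 * s <= l)%N.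
Proof.
move=> l_gt0; rewrite ler_pdivrMr ?ltr0n // mul1r mulrC ler_pdivlMr ?ltr0n //.
by rewrite -natrM ler_nat mulnC.
Qed.

Lemma valuation_le_expected_gain (R : realFieldType) (s l w : nat) :
  (0 < s)%N -> (s <= w <= l)%N ->
  w%:R <= (if (s%:R / l%:R : R) <= 1 / 2 then 3 / (s%:R / l%:R : R) else 6) *
          ((total_gain l.+1 w)%:R / (l.+1 ^ 2)%:R).
Proof.
move=> s_gt0 hw; have /andP[hsw hwl] := hw.
have l_gt0 : (0 < l)%N by lia.
have D_gt0 : 0 < (l.+1 ^ 2)%:R :> R by rewrite ltr0n expn_gt0.
set G : R := (total_gain l.+1 w)%:R; set D : R := (l.+1 ^ 2)%:R.
have s_gt0R : 0 < s%:R :> R by rewrite ltr0n.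
have l_gt0R : 0 < l%:R :> R by rewrite ltr0n.
rewrite natr_ratio_le_half //; case: leqP => hsl.
  have H : 2 * s%:R * w%:R * D <= l%:R * (6 * G).
    by have := total_gain_ge_small hw hsl; rewrite -(ler_nat R) natrM -/D !natrM.
  have -> : 3 / (s%:R / l%:R) * (G / D) = 3 * l%:R * G / (s%:R * D).
    by field; apply/and3P; split; apply: lt0r_neq0; lra.
  rewrite ler_pdivlMr ?mulr_gt0 //; lra.
have H : w%:R * D <= 6 * G.
  by have := total_gain_ge_large hw hsl; rewrite -(ler_nat R) natrM -/D !natrM.
by rewrite mulrA ler_pdivlMr.
Qed.

Lemma profit_coup_le_valuations (R : realFieldType) (n : nat) (E : seq customer)
    (p : 'I_n -> R) :
  profit_coup E p <= \sum_(c <- E) (cw c)%:R.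
Proof.
rewrite /profit_coup big_mkcond /=; apply: ler_sum => c _.
by case: ifP => h; rewrite ?ge_max ?h ler0n.
Qed.

Theorem theorem1 (R : realFieldType) (n : nat) (E : seq customer) (s l : nat) :
  valid_instance n E ->
  all (fun c => (s <= cw c <= l)%N) E ->
  has (fun c => cw c == s) E ->
  has (fun c => cw c == l) E ->
  (1 <= s)%N ->
  let r : R := s%:R / l%:R in
  forall p : 'I_n -> R,
    profit_coup E p / expected_profit_line_random R n l E
      <= (if r <= 1/2 then 3 / r else 6).
Proof.
move=> valid val_range _ has_l s_gt0 r p.
have s_le_l : (s <= l)%N.
  have /allP/(_ l) : all (fun w => s <= w <= l)%N (map cw E) by rewrite all_map.
  by rewrite -has_pred1 has_map => /(_ has_l)/andP[].
set B := if r <= 1 / 2 then 3 / r else 6.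
set Ex := expected_profit_line_random R n l E.
have r_gt0 : 0 < r by rewrite divr_gt0 ?ltr0n //; lia.
have B_gt0 : 0 < B by rewrite /B; case: ifP => _; [apply: divr_gt0 |]; rewrite ?ltr0n.
have val_le_BEx : \sum_(c <- E) (cw c)%:R <= B * Ex.
  rewrite /Ex expected_profit_line_random_eq // mulr_sumr.
  rewrite (big_seq_all val_range) [X in _ <= X](big_seq_all val_range).
  by apply: ler_sum => c hc; apply: valuation_le_expected_gain.
have Ex_ge0 : 0 <= Ex.
  by rewrite -(pmulr_rge0 _ B_gt0) (le_trans _ val_le_BEx) ?sumr_ge0.
(* [Ex = 0] is impossible, and harmless anyway since [x / 0 = 0]. *)
have [->|Ex_neq0] := eqVneq Ex 0; first by rewrite invr0 mulr0 ltW.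
rewrite ler_pdivrMr ?lt_def ?Ex_neq0 //.
exact: le_trans (profit_coup_le_valuations E p) val_le_BEx.
Qed.
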